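(* Let $a(s),b(s)\in\mathbb{C}[s]$ be two nonzero polynomials, and let $(a\bullet b)(s)\in\mathbb{C}[s]$ be the monic polynomial such that $$\langle a(s),b(t)\rangle\cap\mathbb{C}[s+t]=\langle (a\bullet b)(s+t)\rangle,$$ where $\langle a(s),b(t)\rangle$ is the ideal generated by $a(s)$ and $b(t)$ in $\mathbb{C}[s,t]$, and the intersection is an ideal of the subring $\mathbb{C}[s+t]\subseteq\mathbb{C}[s,t]$. Then $a\bullet b=a*b$.
   Context: For a polynomial $p(s)\in\mathbb{C}[s]$, let $R_p\subseteq\mathbb{C}$ denote the set of the opposites of its roots (i.e. $\alpha\in R_p$ iff $p(-\alpha)=0$). For $\alpha\in R_p$, $m_\alpha(p)$ denotes the multiplicity of $-\alpha$ as a root of $p$. For nonzero $a,b\in\mathbb{C}[s]$, the star operation $a*b\in\mathbb{C}[s]$ is the monic polynomial with $R_{a*b}=R_a+R_b=\{\alpha+\beta:\alpha\in R_a,\beta\in R_b\}$ (with the convention that the sum of the empty set with any set is empty, so $a*b=1$ if $a$ or $b$ is constant) and, for every $\gamma\in R_{a*b}$, multiplicity $m_\gamma(a*b)=\max\{m_\alpha(a)+m_\beta(b)-1:\alpha\in R_a,\beta\in R_b,\ \alpha+\beta=\gamma\}$. *)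

From HB Require Import structures.
From mathcomp Require Import all_boot all_order all_algebra.
From mathcomp Require Import complex.
Set Implicit Arguments. Unset Strict Implicit. Unset Printing Implicit Defensive.
Import Order.TTheory GRing.Theory Num.Theory.
Local Open Scope ring_scope.

(* Polynomials in C[s] are {poly F}; polynomials in C[s,t] are
   {poly {poly F}}: the outer variable 'X is t, the inner variable
   (the coefficient ring {poly F}) is s. *)
Section Defs.
Variable F : closedFieldType.

Definition in_s (f : {poly F}) : {poly {poly F}} := f%:P.
Definition in_t (f : {poly F}) : {poly {poly F}} := map_poly polyC f.
Definition in_spt (f : {poly F}) : {poly {poly F}} :=
  (map_poly polyC f) \Po ('X + ('X : {poly F})%:P).

Definition in_ideal2 (g1 g2 h : {poly {poly F}}) : Prop :=
  exists u v : {poly {poly F}}, h = u * g1 + v * g2.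

Definition opp_roots (p : {poly F}) : seq F :=
  undup [seq - z | z <- sval (closed_field_poly_normal p)].

Definition mult (alpha : F) (p : {poly F}) : nat := mup (- alpha) p.

Definition star (a b : {poly F}) : {poly F} :=
  let pairs := [seq (x, y) | x <- opp_roots a, y <- opp_roots b] in
  \prod_(g <- undup [seq xy.1 + xy.2 | xy <- pairs])
     ('X + g%:P) ^+ (\max_(xy <- pairs | xy.1 + xy.2 == g)
                        (mult xy.1 a + mult xy.2 b - 1)%N).

Definition is_bullet (a b c : {poly F}) : Prop :=
  c \is monic /\
  forall p : {poly F}, in_ideal2 (in_s a) (in_t b) (in_spt p) <-> c %| p.

End Defs.

From HB Require Import structures.
From mathcomp Require Import all_boot all_order all_algebra.
From mathcomp Require Import complex.
From mathcomp Require Import ring zify.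
Import Order.TTheory GRing.Theory Num.Theory.
Local Open Scope ring_scope.

(* Write x, y for roots of a, b with multiplicities m, n.  By the Chinese
   remainder theorem, applied to the factorisation of a(s) and then to that
   of b(t), p(s+t) lies in <a(s), b(t)> iff it lies in every local ideal
   <(s-x)^m, (t-y)^n>.  Writing s+t-x-y = (s-x) + (t-y), the binomial
   expansion of (s+t-x-y)^(m+n-1) shows that (X-(x+y))^(m+n-1) | p suffices.
   Conversely, substituting t = y handles n = 1, and differentiating in t
   maps the ideal for n+1 into the one for n; in characteristic 0,
   (X-c)^k | p and (X-c)^k | p' give (X-c)^(k+1) | p.  So p(s+t) lies in the
   ideal iff a * b | p, and a * b is the monic generator. *)

Lemma dvdp_XsubCX_deriv (F : fieldType) (c : F) (p : {poly F}) k :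
  k%:R != 0 :> F -> ('X - c%:P) ^+ k %| p -> ('X - c%:P) ^+ k %| p^`() ->
  ('X - c%:P) ^+ k.+1 %| p.
Proof.
case: k => [|k]; first by rewrite eqxx.
move=> k0 /dvdpP [r ->]; rewrite derivM deriv_exp derivXsubC mul1r /=.
rewrite (dvdp_addr _ (dvdp_mull _ (dvdpp _))) mulrnAr exprSr mulrC -mulrnAl.
rewrite dvdp_mul2r ?expf_neq0 ?polyXsubC_eq0 // => dvd_rk.
have rc : root r c.
  move: dvd_rk; rewrite dvdp_XsubCl /root hornerMn -mulr_natr mulf_eq0.
  by rewrite (negbTE k0) orbF.
rewrite -exprS [X in X %| _]exprS dvdp_mul2r ?expf_neq0 ?polyXsubC_eq0 //.
by rewrite dvdp_XsubCl.
Qed.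

Section Ideal2.
Context {F : closedFieldType}.
Implicit Types A B P Q : {poly {poly F}}.

Lemma in_ideal2_meml A B Q : in_ideal2 A B (Q * A).
Proof. by exists Q, 0; rewrite mul0r addr0. Qed.

Lemma in_ideal2_memr A B Q : in_ideal2 A B (Q * B).
Proof. by exists 0, Q; rewrite mul0r add0r. Qed.

Lemma in_ideal2_mull A B P Q : in_ideal2 A B P -> in_ideal2 A B (Q * P).
Proof. by move=> [u [v ->]]; exists (Q * u), (Q * v); ring. Qed.

Lemma in_ideal2C A B P : in_ideal2 A B P -> in_ideal2 B A P.
Proof. by move=> [u [v ->]]; exists v, u; rewrite addrC. Qed.

Lemma in_ideal2W A B C D P : in_ideal2 (C * A) (D * B) P -> in_ideal2 A B P.
Proof. by move=> [u [v ->]]; exists (u * C), (v * D); rewrite !mulrA. Qed.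

Lemma in_ideal2_exprD A B m n :
  in_ideal2 (A ^+ m) (B ^+ n) ((A + B) ^+ (m + n - 1)).
Proof.
rewrite exprDn; apply: (big_ind (in_ideal2 _ _)).
- by exists 0, 0; rewrite !mul0r addr0.
- by move=> _ _ [u [v ->]] [u' [v' ->]]; exists (u + u'), (v + v'); ring.
move=> [i /= _] _; have [lt_in|le_ni] := ltnP i n.
  rewrite -(@subnK m (m + n - 1 - i)) ?exprD; last by lia.
  by rewrite mulrAC -mulrnAl; apply: in_ideal2_meml.
by rewrite -(subnK le_ni) exprD mulrA -mulrnAl; apply: in_ideal2_memr.
Qed.

Variable phi : {rmorphism {poly F} -> {poly {poly F}}}.

Lemma in_ideal2_coprime A f g P : coprimep f g ->
  in_ideal2 A (phi f) P -> in_ideal2 A (phi g) P -> in_ideal2 A (phi (f * g)) P.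
Proof.
move=> /Bezout_eq1_coprimepP [[u v] /= /(congr1 phi)].
rewrite rmorph1 rmorphD !rmorphM => Euv [x1 [y1 E1]] [x2 [y2 E2]].
exists (phi u * phi f * x2 + phi v * phi g * x1), (phi u * y2 + phi v * y1).
rewrite -[LHS]mul1r -Euv mulrDl {1}E2 E1; ring.
Qed.

Lemma in_ideal2_polyC A c P : c != 0 -> in_ideal2 A (phi c%:P) P.
Proof.
move=> c0; rewrite -[P]mulr1 -(rmorph1 phi) -polyC1 -(mulVf c0) polyCM.
by rewrite rmorphM mulrA; apply: in_ideal2_memr.
Qed.

Lemma in_ideal2_root_powers A b P : b != 0 ->
  (forall y, root b y -> in_ideal2 A (phi (('X - y%:P) ^+ mup y b)) P) ->
  in_ideal2 A (phi b) P.
Proof.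
have [n le_b_n] := ubnP (size b); elim: n => // n IHn in b le_b_n *.
move=> b0 Hb; have [/closed_rootP [y ry]|] := boolP (size b != 1).
  have [m [r /implyP/(_ b0) nry Eb]] := multiplicity_XsubC b y.
  have r0 : r != 0 by apply: contraNneq nry => ->; rewrite root0.
  have mupb : mup y b = m by rewrite Eb mupMr // mup_XsubCX eqxx.
  have m0 : (0 < m)%N by rewrite -mupb -XsubC_dvd // dvdp_XsubCl.
  rewrite Eb; apply: in_ideal2_coprime.
  - by rewrite coprimep_expr // coprimep_XsubC.
  - apply: IHn => // [|z rz].
      move: le_b_n; rewrite Eb size_Mmonic ?monic_exp ?monicXsubC //.
      by rewrite size_exp_XsubC; lia.
    have zy : z != y by apply: contraNneq nry => <-.
    have -> : mup z r = mup z b.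
      by rewrite Eb mupMl // rootE horner_exp hornerXsubC expf_neq0 // subr_eq0.
    by apply: Hb; rewrite Eb rootM rz.
  - by rewrite -mupb; apply: Hb.
by rewrite negbK => /size_poly1P [c c0 ->]; exact: in_ideal2_polyC.
Qed.

End Ideal2.

Section SumVariable.
Context {F : closedFieldType}.
Implicit Types p q : {poly F}.

Lemma in_sptM p q : in_spt (p * q) = in_spt p * in_spt q.
Proof. by rewrite /in_spt !rmorphM. Qed.

Lemma in_sptX p k : in_spt (p ^+ k) = in_spt p ^+ k.
Proof. by rewrite /in_spt !rmorphXn. Qed.

Lemma in_spt_XsubC (x y : F) :
  in_spt ('X - (x + y)%:P) = in_s ('X - x%:P) + in_t ('X - y%:P).
Proof.
rewrite /in_spt /in_s /in_t !map_polyXsubC comp_polyB comp_polyX comp_polyC.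
by rewrite !(rmorphB, rmorphD) /=; ring.
Qed.

Lemma horner_in_spt p (c : F) : (in_spt p).[c%:P] = p \Po ('X + c%:P).
Proof. by rewrite /in_spt horner_comp !hornerE addrC. Qed.

Lemma deriv_in_spt p : (in_spt p)^`() = in_spt p^`().
Proof.
by rewrite /in_spt deriv_comp derivD derivX derivC addr0 mulr1 deriv_map.
Qed.

Lemma in_ideal2_spt_root a b p y :
  in_ideal2 (in_s a) (in_t b) (in_spt p) -> root b y -> a \Po ('X - y%:P) %| p.
Proof.
move=> [u [v Ep]] /eqP by0.
have : p \Po ('X + y%:P) = u.[y%:P] * a.
  rewrite -horner_in_spt Ep hornerD !hornerM /in_s /in_t hornerC.
  by rewrite (horner_map polyC) by0 mulr0 addr0.
move=> /(congr1 (comp_poly ('X - y%:P))); rewrite comp_polyXaddC_K => ->.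
by rewrite comp_polyM dvdp_mull.
Qed.

Lemma in_ideal2_spt_deriv a p y n :
  in_ideal2 (in_s a) (in_t (('X - y%:P) ^+ n.+1)) (in_spt p) ->
  in_ideal2 (in_s a) (in_t (('X - y%:P) ^+ n)) (in_spt p^`()).
Proof.
move=> [u [v /(congr1 deriv)]]; rewrite deriv_in_spt => ->.
rewrite derivD !derivM /in_s derivC /in_t deriv_map deriv_exp derivXsubC mul1r.
rewrite rmorphMn exprSr rmorphM /=.
exists u^`(), (v^`() * map_poly polyC ('X - y%:P) + v *+ n.+1).
rewrite mulr0 addr0 mulrnAr !mulrDl mulrnAl; ring.
Qed.

Lemma dvdp_in_ideal2_spt x y m n p :
  ('X - (x + y)%:P) ^+ (m + n - 1) %| p ->
  in_ideal2 (in_s (('X - x%:P) ^+ m)) (in_t (('X - y%:P) ^+ n)) (in_spt p).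
Proof.
move=> /dvdpP [r ->]; rewrite in_sptM in_sptX in_spt_XsubC.
by rewrite /in_s /in_t !rmorphXn; apply/in_ideal2_mull/in_ideal2_exprD.
Qed.

Hypothesis F0 : [pchar F] =i pred0.

Lemma in_ideal2_spt_dvdp x y m n p : (0 < m)%N -> (0 < n)%N ->
  in_ideal2 (in_s (('X - x%:P) ^+ m)) (in_t (('X - y%:P) ^+ n)) (in_spt p) ->
  ('X - (x + y)%:P) ^+ (m + n - 1) %| p.
Proof.
move=> m0; case: n => // n _; rewrite addnS subn1 /=.
elim: n p => [|n IHn] p Ip.
  have := @in_ideal2_spt_root _ _ p y Ip.
  rewrite expr1 root_XsubC eqxx addn0 => /(_ isT).
  rewrite rmorphXn /= comp_polyB comp_polyX comp_polyC -addrA -opprD.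
  by rewrite -polyCD [y + x]addrC.
rewrite addnS; apply: dvdp_XsubCX_deriv.
- by rewrite ((pcharf0P _).1 F0); lia.
- apply: IHn; apply: (@in_ideal2W _ _ _ 1 (in_t ('X - y%:P))).
  by rewrite mul1r /in_t -rmorphM -exprS.
- exact/IHn/in_ideal2_spt_deriv.
Qed.

Definition root_sums_dvdp (a b p : {poly F}) :=
  forall x y, root a x -> root b y ->
    ('X - (x + y)%:P) ^+ (mup x a + mup y b - 1) %| p.

Lemma in_ideal2_sptP a b p : a != 0 -> b != 0 ->
  in_ideal2 (in_s a) (in_t b) (in_spt p) <-> root_sums_dvdp a b p.
Proof.
have mup_gt0 c z : c != 0 -> root c z -> (0 < mup z c)%N.
  by move=> c0 rz; rewrite -XsubC_dvd // dvdp_XsubCl.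
move=> a0 b0; split => [Ip x y rx ry | Hp].
  apply: in_ideal2_spt_dvdp; [exact: mup_gt0 | exact: mup_gt0 |].
  have /dvdpP [c Ea] : ('X - x%:P) ^+ mup x a %| a by rewrite -mup_geq.
  have /dvdpP [d Eb] : ('X - y%:P) ^+ mup y b %| b by rewrite -mup_geq.
  apply: (@in_ideal2W _ _ _ (in_s c) (in_t d)).
  by rewrite /in_s /in_t -polyCM -rmorphM -Ea -Eb.
apply/in_ideal2C/(in_ideal2_root_powers polyC) => // x rx.
apply/in_ideal2C/(in_ideal2_root_powers (map_poly polyC)) => // y ry.
exact/dvdp_in_ideal2_spt/Hp.
Qed.

End SumVariable.

Section Star.
Context {F : closedFieldType}.
Implicit Types a b p : {poly F}.

Lemma mem_opp_roots a z : a != 0 -> (z \in opp_roots a) = root a (- z).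
Proof.
move=> a0; rewrite /opp_roots mem_undup.
case: closed_field_poly_normal => r /= Ea.
by rewrite -{1}(opprK z) (mem_map oppr_inj) [in RHS]Ea rootZ ?lead_coef_eq0 // root_prod_XsubC.
Qed.

Lemma star_monic a b : star a b \is monic.
Proof. by apply: monic_prod => g _; apply/monic_exp/monicXaddC. Qed.

Lemma prod_XaddCX_dvdp (s : seq F) (k : F -> nat) p : uniq s ->
  (forall g, g \in s -> ('X + g%:P) ^+ k g %| p) ->
  \prod_(g <- s) ('X + g%:P) ^+ k g %| p.
Proof.
elim: s => [|g s IHs] /=; first by rewrite big_nil dvd1p.
move=> /andP [gs us] Hs; rewrite big_cons Gauss_dvdp.
  by rewrite Hs ?mem_head // IHs // => h hs; apply: Hs; rewrite inE hs orbT.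
apply: coprimep_expl.
rewrite -[g%:P]opprK -polyCN coprimep_sym coprimep_XsubC.
rewrite /root horner_prod prodf_seq_neq0; apply/allP => h hs /=.
rewrite horner_exp !hornerE expf_neq0 //.
by apply: contraNneq gs => /eqP; rewrite addrC subr_eq0 => /eqP <-.
Qed.

Lemma star_dvdpP a b p : a != 0 -> b != 0 ->
  star a b %| p <-> root_sums_dvdp a b p.
Proof.
move=> a0 b0; rewrite /star; set pairs := [seq _ | _ <- _, _ <- _].
split => [Hp x y rx ry | Hp].
  have hp : (- x, - y) \in pairs.
    by apply: allpairs_f; rewrite mem_opp_roots ?opprK.
  have hg : - x + - y \in undup [seq xy.1 + xy.2 | xy <- pairs].
    by rewrite mem_undup; apply: (map_f (fun xy : F * F => xy.1 + xy.2) hp).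
  apply: dvdp_trans Hp; rewrite (bigD1_seq _ hg (undup_uniq _)) /=.
  apply/dvdp_mulr; rewrite -opprD polyCN; apply: dvdp_exp2l.
  apply: leq_trans (@leq_bigmax_seq _ _ _ _ _ hp _); last by rewrite /= opprD.
  by rewrite /mult /= !opprK.
apply: prod_XaddCX_dvdp; first exact: undup_uniq.
move=> g _; rewrite big_seq_cond.
apply: (big_ind (fun k => ('X + g%:P) ^+ k %| p)); first by rewrite dvd1p.
  by move=> k1 k2 h1 h2; case: (leqP k1 k2).
move=> [al be] /andP [/allpairsP [[u v] /= [hu hv [-> ->]]] /eqP <-] /=.
rewrite !mem_opp_roots // in hu hv.
by have := Hp _ _ hu hv; rewrite /mult -opprD polyCN opprK.
Qed.

End Star.

Theorem proposition2p1 (R : rcfType) (a b : {poly R[i]}) :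
  a != 0 -> b != 0 ->
  forall c : {poly R[i]}, is_bullet a b c <-> c = star a b.
Proof.
move=> a0 b0 c.
have bulletP p : in_ideal2 (in_s a) (in_t b) (in_spt p) <-> star a b %| p.
  by rewrite star_dvdpP // (in_ideal2_sptP (pchar_num _)).
split=> [[c_monic Hc] | ->]; last first.
  by split=> [|p]; [exact: star_monic | exact: bulletP].
apply/eqP; rewrite -eqp_monic ?star_monic // /eqp.
by apply/andP; split; [apply/Hc/bulletP | apply/bulletP/Hc]; exact: dvdpp.
Qed.
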